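(* For monomials $m,m'$ of $\mathcal{A}$ with coefficient $1$, we have $m\le m'$ if and only if $\mathbf{w}(m)\le\mathbf{w}(m')$. Furthermore, the poset $(\mathbf{Z}_{\ge0}^r)^\star$ is noetherian: for any sequence $x_1,x_2,\dots$ of its elements there exist $i<j$ with $x_i\le x_j$.
   Context: Let $\mathbf{k}$ be a commutative noetherian ring, $r$ a positive integer, $x_1,\dots,x_r$ the standard basis of $\mathbf{k}^r$ (so $\mathrm{Sym}^d\mathbf{k}^r$ is the space of degree-$d$ polynomials in $x_1,\dots,x_r$). Let $\mathcal{A}=\bigoplus_{n,d\ge0}\mathcal{A}_{d,n}$ with $\mathcal{A}_{d,n}=(\mathrm{Sym}^d\mathbf{k}^r)^{\otimes n}$ (tensor over $\mathbf{k}$). A split $\sigma$ of $[n+m]$ is a pair of a subset $\{i_1<\cdots<i_n\}$ of $[n+m]=\{1,\dots,n+m\}$ and its complement $\{j_1<\cdots<j_m\}$; it defines the shuffle product $\cdot_\sigma:\mathcal{A}_{d,n}\otimes\mathcal{A}_{d,m}\to\mathcal{A}_{d,n+m}$, $(u_1\otimes\cdots\otimes u_n)\cdot_\sigma(v_1\otimes\cdots\otimes v_m)=w_1\otimes\cdots\otimes w_{n+m}$ with $w_{i_k}=u_k$, $w_{j_k}=v_k$ (and $f\cdot_\sigma g=0$ if bidegrees do not match $\sigma$). The product $*:\mathcal{A}_{d,n}\otimes\mathcal{A}_{e,n}\to\mathcal{A}_{d+e,n}$ multiplies factorwise, $(u_1\otimes\cdots\otimes u_n)*(v_1\otimes\cdots\otimes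 v_n)=u_1v_1\otimes\cdots\otimes u_nv_n$, and all other products are $0$. An ideal of $\mathcal{A}$ is a bihomogeneous subspace $I$ with $g*f\in I$ and $g\cdot_\sigma f\in I$ for all $f\in I$, $g\in\mathcal{A}$ and splits $\sigma$. A monomial is an element $w_1\otimes\cdots\otimes w_n$ with each $w_i$ a scalar multiple of a monomial $x_{j_1}\cdots x_{j_d}$. For monomials $m,m'$ with coefficient $1$, $m\le m'$ means $m'$ lies in the ideal generated by $m$. Order $\mathbf{Z}_{\ge0}^r$ pointwise. $(\mathbf{Z}_{\ge0}^r)^\star$ is the set of finite words with letters in $\mathbf{Z}^r_{\ge0}$, with $(w_1,\dots,w_n)\le(w'_1,\dots,w'_{m})$ iff there exist $1\le i_1<\cdots<i_n\le m$ with $w_j\le w'_{i_j}$ for all $j$. For a monomial $m=w_1\otimes\cdots\otimes w_n$, $\mathbf{w}(m)$ is the word of exponent vectors of $w_1,\dots,w_n$. *)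

From HB Require Import structures.
From mathcomp Require Import all_boot all_order all_algebra.
From mathcomp Require Import finmap.
From mathcomp.multinomials Require Import monalg.

Set Implicit Arguments.
Unset Strict Implicit.
Unset Printing Implicit Defensive.

Import GRing.Theory.
Local Open Scope ring_scope.

Definition ring_ideal (R : comNzRingType) (I : R -> Prop) : Prop :=
  [/\ I 0, (forall x y, I x -> I y -> I (x + y)) & (forall a x, I x -> I (a * x))].

Definition noetherian_ring (R : comNzRingType) : Prop :=
  forall I : nat -> R -> Prop,
    (forall n, ring_ideal (I n)) ->
    (forall n x, I n x -> I n.+1 x) ->
    exists N, forall n x, (N <= n)%N -> I n x -> I N x.

(* an element of Z_{>=0}^r is an r-tuple of naturals; a monomial x^a of degree
   sumn a in Sym k^r is identified with its exponent vector a. *)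
Definition vle (r : nat) (a b : r.-tuple nat) : bool :=
  [forall i : 'I_r, tnth a i <= tnth b i]%N.

Definition vadd (r : nat) (a b : r.-tuple nat) : r.-tuple nat :=
  [tuple (tnth a i + tnth b i)%N | i < r].

Definition word_le (r : nat) (w w' : seq (r.-tuple nat)) : Prop :=
  exists2 t, subseq t w' & all2 (@vle r) w t.

(* basis keys (d, w): d the degree, w the word of exponent vectors; the key
   (d, w) with every letter of total degree d stands for the pure tensor of
   monomials x^{w_1} (x) ... (x) x^{w_n} in A_{d, size w}. The degree d is kept
   so that A_{d,0} = k are distinct for distinct d. *)
Definition key (r : nat) := (nat * seq (r.-tuple nat))%type.

Definition valid_key (r : nat) (a : key r) : bool :=
  all (fun x : r.-tuple nat => sumn x == a.1) a.2.

Definition Alg (k : comNzRingType) (r : nat) := {malg k[key r]}.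

(* A = (+)_{d,n} A_{d,n} is the submodule of elements supported on valid keys *)
Definition inA (k : comNzRingType) (r : nat) (f : Alg k r) : Prop :=
  forall a, a \in msupp f -> valid_key a.

Definition hcomp (k : comNzRingType) (r : nat) (d n : nat) (f : Alg k r) : Alg k r :=
  \sum_(a <- msupp f | (a.1 == d) && (size a.2 == n)) << f@_a *g a >>.

(* shuffles: a split sigma of [n+m] is encoded by a bitseq s of size n+m,
   with s_i = true iff i belongs to {i_1 < ... < i_n}; n = count id s. *)
Fixpoint interleave (T : Type) (s : bitseq) (u v : seq T) : seq T :=
  match s with
  | [::] => [::]
  | true :: s' => match u with x :: u' => x :: interleave s' u' v | [::] => [::] end
  | false :: s' => match v with y :: v' => y :: interleave s' u v' | [::] => [::] end
  end.

Definition split_n (s : bitseq) : nat := count id s.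
Definition split_m (s : bitseq) : nat := (size s - count id s)%N.

(* u .sigma v on basis keys; None (product 0) when bidegrees do not match sigma *)
Definition shuf_key (r : nat) (s : bitseq) (a b : key r) : option (key r) :=
  if [&& a.1 == b.1, size a.2 == split_n s & size b.2 == split_m s]
  then Some (a.1, interleave s a.2 b.2) else None.

Definition shufA (k : comNzRingType) (r : nat) (s : bitseq) (f g : Alg k r) : Alg k r :=
  \sum_(a <- msupp f) \sum_(b <- msupp g)
     (if shuf_key s a b is Some c then << f@_a * g@_b *g c >> else 0).

Definition mul_key (r : nat) (a b : key r) : option (key r) :=
  if size a.2 == size b.2
  then Some ((a.1 + b.1)%N, [seq vadd p.1 p.2 | p <- zip a.2 b.2]) else None.

Definition mulA (k : comNzRingType) (r : nat) (f g : Alg k r) : Alg k r :=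
  \sum_(a <- msupp f) \sum_(b <- msupp g)
     (if mul_key a b is Some c then << f@_a * g@_b *g c >> else 0).

Definition is_idealA (k : comNzRingType) (r : nat) (I : Alg k r -> Prop) : Prop :=
  [/\ forall f, I f -> inA f,
      I 0,
      (forall f g, I f -> I g -> I (f + g)),
      (forall (c : k) f, I f -> I (c *: f))
    & (forall f d n, I f -> I (hcomp d n f))] /\
  (forall f g, inA g -> I f -> I (mulA g f)) /\
  (forall f g (s : bitseq), inA g -> I f -> I (shufA s g f)).

Definition monoA (k : comNzRingType) (r : nat) (d : nat) (w : seq (r.-tuple nat))
  : Alg k r := << ((d, w) : key r) >>.

(* m <= m' iff m' lies in the ideal generated by m (= intersection of all
   ideals containing m) *)
Definition mon_le (k : comNzRingType) (r : nat) (m m' : Alg k r) : Prop :=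
  forall I : Alg k r -> Prop, is_idealA I -> I m -> I m'.

(** If [w] is dominated letterwise by a subword [t] of [w'], the monomial
    [x^w] is carried to [x^t] by a factorwise product with the monomial of the
    letterwise differences, and [x^t] is carried to [x^w'] by shuffling in the
    remaining letters of [w'].  Conversely, the elements all of whose basis
    monomials have words above [w] form an ideal, since factorwise products
    raise letters and shuffles insert letters; it contains [x^w], hence [x^w'].

    Noetherianity of the word order is Higman's lemma, proved by the
    Nash-Williams minimal bad sequence argument from Dickson's lemma (every
    sequence in [Z_{>=0}^r] has a coordinatewise nondecreasing subsequence). *)

From Pilot Require Import Defs.
From HB Require Import structures.
From mathcomp Require Import all_boot all_order all_algebra.
From mathcomp Require Import finmap.
From mathcomp.multinomials Require Import monalg.
From Stdlib Require Import Classical ClassicalEpsilon.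

Set Implicit Arguments.
Unset Strict Implicit.
Unset Printing Implicit Defensive.

Import GRing.Theory.

Section Subword.
Variables (T : eqType) (R : rel T).

Definition subword (u v : seq T) : Prop := exists2 t, subseq t v & all2 R u t.

Lemma subword_nil v : subword [::] v.
Proof. by exists [::]; rewrite ?sub0seq. Qed.

Lemma subword_cons_r a u v : subword u v -> subword u (a :: v).
Proof. by case=> t tv Rut; exists t => //; apply: subseq_trans tv (subseq_cons _ _). Qed.

Lemma subword_cons a b u v : R a b -> subword u v -> subword (a :: u) (b :: v).
Proof. by move=> Rab [t tv Rut]; exists (b :: t); rewrite /= ?eqxx ?Rab. Qed.

Lemma subword_subseq u v v' : subword u v -> subseq v v' -> subword u v'.
Proof. by case=> t tv Rut vv'; exists t => //; apply: subseq_trans tv vv'. Qed.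

Lemma all2_refl : reflexive R -> reflexive (all2 R).
Proof. by move=> Rxx; elim=> //= x u ->; rewrite Rxx. Qed.

Lemma all2_trans : transitive R -> transitive (all2 R).
Proof.
move=> Rtr v u w; elim: u v w => [|x u IH] [|y v] [|z w] //=.
by move=> /andP[xy uv] /andP[yz vw]; rewrite (Rtr _ _ _ xy yz) (IH _ _ uv vw).
Qed.

Lemma subseq_all2 t u u' :
  subseq t u -> all2 R u u' -> exists2 t', subseq t' u' & all2 R t t'.
Proof.
elim: u u' t => [|x u IH] [|x' u'] t //.
  by rewrite subseq0 => /eqP-> _; exists [::].
move=> + /andP[Rxx' Ruu']; case: t => [|y t] /=; first by exists [::]; rewrite ?sub0seq.
case: eqP => [->|_] tu; have [t' t'u' Rtt'] := IH _ _ tu Ruu'.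
  by exists (x' :: t'); rewrite /= ?eqxx ?Rxx'.
by exists t' => //; apply: subseq_trans t'u' (subseq_cons _ _).
Qed.

Lemma subword_refl : reflexive R -> forall u, subword u u.
Proof. by move=> Rxx u; exists u; rewrite ?all2_refl. Qed.

Lemma subword_all2 u v v' :
  transitive R -> subword u v -> all2 R v v' -> subword u v'.
Proof.
move=> Rtr [t tv Rut] /(subseq_all2 tv)[t' t'v' Rtt'].
by exists t' => //; apply: all2_trans Rut Rtt'.
Qed.

End Subword.

Lemma all_interleave (T : Type) (P : pred T) s (u v : seq T) :
  all P u -> all P v -> all P (interleave s u v).
Proof.
elim: s u v => [|[] s IH] u v Pu Pv //=.
  by case: u Pu => [|x u] //= /andP[-> Pu]; apply: IH.
by case: v Pv => [|y v] //= /andP[-> Pv]; apply: IH.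
Qed.

Lemma subseq_interleave (T : eqType) s (u v : seq T) :
  size u = count id s -> size v = (size s - count id s)%N ->
  subseq v (interleave s u v).
Proof.
elim: s u v => [|[] s IH] u v /=; first by move=> _ /eqP; rewrite size_eq0 => /eqP->.
  case: u => [|x u] //= [su] sv.
  by apply: subseq_trans (IH u v su _) (subseq_cons _ _); rewrite sv subSS.
case: v => [|y v] su sv; first exact: sub0seq.
by rewrite /= eqxx IH //; move: sv; rewrite /= add0n (subSn (count_size id s)) => -[].
Qed.

Lemma interleave_of_subseq (T : eqType) (P : pred T) (t w : seq T) :
  subseq t w -> all P w ->
  exists s u, [/\ interleave s u t = w, size u = count id s,
                  size t = (size s - count id s)%N & all P u].
Proof.
elim: w t => [|x w IH] t; first by rewrite subseq0 => /eqP-> _; exists [::], [::].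
move=> + /andP[Px Pw]; case: t => [|y t] tw.
  have [s [u [<- su st Pu]]] := IH _ (sub0seq w) Pw.
  by exists (true :: s), (x :: u); split; rewrite /= ?su ?Px ?add1n ?subSS.
move: tw => /=; case: eqP => [->|_] tw; have [s [u [<- su st Pu]]] := IH _ tw Pw.
  exists (false :: s), u; split => //=.
  by rewrite st add0n (subSn (count_size id s)).
by exists (true :: s), (x :: u); split; rewrite /= ?su ?Px ?add1n ?subSS.
Qed.

Section ExponentVectors.
Variable r : nat.
Implicit Types (a b : r.-tuple nat) (u v w : seq (r.-tuple nat)).

Lemma sumn_tuple a : sumn a = \sum_(i < r) tnth a i.
Proof. by rewrite sumnE big_tuple. Qed.

Lemma sumn_vadd a b : sumn (vadd a b) = (sumn a + sumn b)%N.
Proof. by rewrite !sumn_tuple -big_split; apply: eq_bigr => i _; rewrite tnth_mktuple. Qed.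

Lemma vle_sumn a b : vle a b -> (sumn a <= sumn b)%N.
Proof. by move/forallP=> ab; rewrite !sumn_tuple; apply: leq_sum => i _. Qed.

Lemma vle_refl : reflexive (@vle r).
Proof. by move=> a; apply/forallP. Qed.

Lemma vle_trans : transitive (@vle r).
Proof.
by move=> b a c /forallP ab /forallP bc; apply/forallP => i; apply: leq_trans (ab i) (bc i).
Qed.

Lemma vle_vadd a b : vle b (vadd a b).
Proof. by apply/forallP=> i; rewrite tnth_mktuple leq_addl. Qed.

Definition vsub a b : r.-tuple nat := [tuple (tnth a i - tnth b i)%N | i < r].

Lemma vsubK a b : vle b a -> vadd (vsub a b) b = a.
Proof. by move/forallP=> ba; apply: eq_from_tnth => i; rewrite !tnth_mktuple subnK. Qed.

Definition wvadd u v := [seq vadd p.1 p.2 | p <- zip u v].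

Lemma all2_vle_wvadd u v : size u = size v -> all2 (@vle r) v (wvadd u v).
Proof. by elim: u v => [|a u IH] [|b v] //= [/IH ->]; rewrite vle_vadd. Qed.

Lemma valid_key_wvadd d e u v :
  valid_key (e, u) -> valid_key (d, v) -> valid_key ((e + d)%N, wvadd u v).
Proof.
rewrite /valid_key /wvadd; elim: u v => [|a u IH] [|b v] //= /andP[/eqP ea eu] /andP[/eqP db dv].
by rewrite sumn_vadd ea db eqxx IH.
Qed.

Lemma all2_vle_wvaddP d d' w t :
  all2 (@vle r) w t -> valid_key (d, w) -> valid_key (d', t) ->
  exists v, [/\ size v = size w, valid_key ((d' - d)%N, v) & wvadd v w = t].
Proof.
elim: w t => [|a w IH] [|b t] //=; first by exists [::].
move=> /andP[ab wt] /andP[/eqP /= da dw] /andP[/eqP /= db dt].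
have [v [sv dv <-]] := IH _ wt dw dt.
have dba : sumn (vsub b a) = (d' - d)%N.
  by rewrite -db -da -[in RHS](vsubK ab) sumn_vadd addnK.
exists (vsub b a :: v); split; first by rewrite /= sv.
  by rewrite /valid_key /= dba eqxx; apply: dv.
by rewrite /wvadd /= vsubK.
Qed.

Lemma all2_vle_degree d d' w t :
  (0 < size w)%N -> all2 (@vle r) w t -> valid_key (d, w) -> valid_key (d', t) ->
  (d <= d')%N.
Proof.
case: w t => [|a w] [|b t] //= _ /andP[/vle_sumn ab _].
by move=> /andP[/eqP /= <- _] /andP[/eqP /= <- _].
Qed.

End ExponentVectors.

Section MalgCoefficients.
Variables (K : choiceType) (R : nzRingType).
Implicit Types f g : {malg R[K]}.
Local Open Scope ring_scope.

Lemma mcoeff_sum_neq0 (I : Type) (s : seq I) (P : pred I) (F : I -> {malg R[K]}) c :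
  (\sum_(i <- s | P i) F i)@_c != 0 -> exists i, (F i)@_c != 0.
Proof.
elim: s => [|i s IH]; rewrite ?big_nil ?mcoeff0 ?eqxx // big_cons.
case: (P i) => //; rewrite mcoeffD; have [->|Fi _] := eqVneq (F i)@_c 0.
  by rewrite add0r.
by exists i.
Qed.

Lemma mcoeff_bilinear_neq0 (op : K -> K -> option K) f g c :
  (\sum_(a <- msupp f) \sum_(b <- msupp g)
     (if op a b is Some c' then << f@_a * g@_b *g c' >> else 0))@_c != 0 ->
  exists a b, [/\ f@_a != 0, g@_b != 0 & op a b = Some c].
Proof.
move=> /mcoeff_sum_neq0[a] /mcoeff_sum_neq0[b] nz; exists a, b; move: nz.
case: (op a b) => [c'|]; last by rewrite mcoeff0 eqxx.
rewrite mcoeffU; have [<-|] := eqVneq c' c; last by rewrite mulr0n eqxx.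
rewrite mulr1n => nz; split => //.
  by apply: contraNneq nz => ->; rewrite mul0r.
by apply: contraNneq nz => ->; rewrite mulr0.
Qed.

End MalgCoefficients.

Section Monomials.
Variables (k : comNzRingType) (r : nat).
Implicit Types (d e : nat) (u v w t : seq (r.-tuple nat)) (f g : Alg k r).
Local Open Scope ring_scope.

Lemma msupp_monoA d w : msupp (monoA k d w) = [fset ((d, w) : key r)]%fset.
Proof. by rewrite /monoA msuppU oner_eq0. Qed.

Lemma inA_monoA d w : valid_key (d, w) -> inA (monoA k d w).
Proof. by move=> dw a; rewrite msupp_monoA inE => /eqP->. Qed.

Lemma mulA_monoA e d v w : size v = size w ->
  Defs.mulA (monoA k e v) (monoA k d w) = monoA k (e + d)%N (wvadd v w).
Proof.
move=> svw; rewrite /Defs.mulA !msupp_monoA !big_seq_fset1 /mul_key /= svw eqxx.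
by rewrite !mcoeffUU mulr1.
Qed.

Lemma shufA_monoA s d u t :
  size u = count id s -> size t = (size s - count id s)%N ->
  shufA s (monoA k d u) (monoA k d t) = monoA k d (interleave s u t).
Proof.
move=> su st; rewrite /shufA !msupp_monoA !big_seq_fset1 /shuf_key /split_n /split_m /=.
by rewrite su st !eqxx !mcoeffUU mulr1.
Qed.

Definition supported_above w f : Prop :=
  forall a, f@_a != 0 -> valid_key a /\ word_le w a.2.

Lemma mul_key_above w (a b c : key r) :
  valid_key a -> valid_key b -> word_le w b.2 -> mul_key a b = Some c ->
  valid_key c /\ word_le w c.2.
Proof.
rewrite /mul_key; case: eqP => // sab va vb wb [<-]; split.
  by case: a b va vb {sab wb} => e u [d v]; apply: valid_key_wvadd.
exact: subword_all2 (@vle_trans r) wb (all2_vle_wvadd sab).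
Qed.

Lemma shuf_key_above w s (a b c : key r) :
  valid_key a -> valid_key b -> word_le w b.2 -> shuf_key s a b = Some c ->
  valid_key c /\ word_le w c.2.
Proof.
rewrite /shuf_key; case: ifP => // /and3P[/eqP ab /eqP sa /eqP sb] va vb wb [<-].
split; first by apply: all_interleave; rewrite // ab.
by apply: subword_subseq wb _; apply: subseq_interleave.
Qed.

Lemma supported_above_ideal w : is_idealA (supported_above w).
Proof.
split; [split|split].
- by move=> f fw a; rewrite -mcoeff_neq0 => /fw[].
- by move=> a; rewrite mcoeff0 eqxx.
- move=> f g fw gw a; rewrite mcoeffD.
  by have [->|/fw//] := eqVneq f@_a 0; rewrite add0r => /gw.
- by move=> c f fw a; rewrite mcoeffZ; have [->|/fw//] := eqVneq f@_a 0; rewrite mulr0 eqxx.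
- move=> f d n fw a /mcoeff_sum_neq0[b]; rewrite mcoeffU.
  by have [<-|] := eqVneq b a; rewrite ?mulr0n ?eqxx // mulr1n => /fw.
- move=> f g gA fw a /mcoeff_bilinear_neq0[b [c [gb fc bc]]].
  have [vc wc] := fw _ fc.
  by apply: mul_key_above vc wc bc; apply: gA; rewrite -mcoeff_neq0.
- move=> f g s gA fw a /mcoeff_bilinear_neq0[b [c [gb fc bc]]].
  have [vc wc] := fw _ fc.
  by apply: shuf_key_above vc wc bc; apply: gA; rewrite -mcoeff_neq0.
Qed.

Lemma mon_le_word_le d d' w w' :
  valid_key (d, w) -> mon_le (monoA k d w) (monoA k d' w') -> word_le w w'.
Proof.
move=> dw; have wm : supported_above w (monoA k d w).
  move=> a; rewrite mcoeffU; have [<- _|] := eqVneq ((d, w) : key r) a.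
    by split=> //; exact: (subword_refl (@vle_refl r) w).
  by rewrite eqxx.
move=> /(_ _ (supported_above_ideal w) wm (d', w')).
by rewrite mcoeffUU oner_neq0 => /(_ isT)[].
Qed.

Lemma word_le_mon_le d d' w w' :
  (0 < size w)%N -> valid_key (d, w) -> valid_key (d', w') ->
  word_le w w' -> mon_le (monoA k d w) (monoA k d' w').
Proof.
move=> w_gt0 dw dw' [t tw' wt] I [_ [Imul Ishuf]] Iw.
have dt : valid_key (d', t) by apply/allP => x /(mem_subseq tw') /(allP dw').
have dd' := all2_vle_degree w_gt0 wt dw dt.
have [v [sv dv vwt]] := all2_vle_wvaddP wt dw dt.
have It : I (monoA k d' t).
  by rewrite -vwt -(subnK dd') -mulA_monoA //; apply: Imul => //; exact: inA_monoA.
have [s [u [<- su st du]]] := interleave_of_subseq tw' dw'.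
have := Ishuf _ _ s (inA_monoA (du : valid_key (d', u))) It.
by rewrite shufA_monoA.
Qed.

End Monomials.

Lemma ex_min_measure (A : Type) (m : A -> nat) (P : A -> Prop) :
  (exists a, P a) -> exists a, P a /\ forall b, P b -> (m a <= m b)%N.
Proof.
case=> a Pa; have [n] := ubnP (m a); elim: n a Pa => // n IH a Pa.
rewrite ltnS => le_man.
have [[b [Pb ltba]]|nlt] := classic (exists b, P b /\ (m b < m a)%N).
  exact: IH b Pb (leq_trans ltba le_man).
exists a; split=> // b Pb; rewrite leqNgt; apply/negP => ltba.
by apply: nlt; exists b.
Qed.

Definition has_ascending_subseqs (T : Type) (R : T -> T -> bool) : Prop :=
  forall x : nat -> T, exists f : nat -> nat,
    {homo f : i j / (i < j)%N} /\ (forall i j, (i < j)%N -> R (x (f i)) (x (f j))).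

Lemma nat_has_ascending_subseqs : has_ascending_subseqs leq.
Proof.
move=> y.
pose min_from n i := (n <= i)%N /\ forall j, (n <= j)%N -> (y i <= y j)%N.
pose g n := epsilon (inhabits 0%N) (min_from n).
have gP n : min_from n (g n).
  by apply: epsilon_spec; apply: ex_min_measure; exists n.
pose f := fix f i := g (if i is i'.+1 then (f i').+1 else 0%N).
have f_incr : {homo f : i j / (i < j)%N}.
  by apply: homo_ltn; [apply: ltn_trans | move=> i; apply: (gP _).1].
have f_min i : exists n, min_from n (f i) by case: i => [|i]; eexists; apply: gP.
exists f; split=> // i j /f_incr /ltnW lefij.
have [n [le_nfi min_fi]] := f_min i.
exact/min_fi/(leq_trans le_nfi lefij).
Qed.

Lemma has_ascending_subseqs_relpre (T U : Type) (g : T -> U) (R : U -> U -> bool) :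
  has_ascending_subseqs R -> has_ascending_subseqs (relpre g R).
Proof. by move=> ascR x; apply: ascR (g \o x). Qed.

Lemma has_ascending_subseqs_all (T I : Type) (Rs : I -> T -> T -> bool) (s : seq I) :
  (forall i, has_ascending_subseqs (Rs i)) ->
  has_ascending_subseqs (fun a b => all (fun i => Rs i a b) s).
Proof.
move=> ascRs; elim: s => [|i s IH] x; first by exists id; split.
have [f [f_incr Rf]] := IH x; have [g [g_incr Rg]] := ascRs i (x \o f).
exists (f \o g); split=> [j l ljl|j l ljl] /=; first exact/f_incr/g_incr.
by rewrite Rg // Rf //; apply: g_incr.
Qed.

Lemma dickson (r : nat) : has_ascending_subseqs (@vle r).
Proof.
move=> x; have [f [f_incr Rf]] := has_ascending_subseqs_all (enum 'I_r)
  (fun i => has_ascending_subseqs_relpre (fun a : r.-tuple nat => tnth a i)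
              nat_has_ascending_subseqs) x.
exists f; split=> // i j lij; apply/forallP => c.
by move/allP: (Rf i j lij) => /(_ c); rewrite mem_enum; apply.
Qed.

Section MinimalBadSequence.
Variables (T : eqType) (R : rel T).

Definition bad (x : nat -> seq T) : Prop :=
  forall i j, (i < j)%N -> ~ subword R (x i) (x j).

Definition extends_to_bad (p : seq (seq T)) : Prop :=
  exists2 x, bad x & forall i, (i < size p)%N -> x i = nth [::] p i.

Definition minimal_next (p : seq (seq T)) (w : seq T) : Prop :=
  extends_to_bad (rcons p w) /\
  forall w', extends_to_bad (rcons p w') -> (size w <= size w')%N.

Definition next_min (p : seq (seq T)) : seq T :=
  epsilon (inhabits [::]) (minimal_next p).

Lemma next_minP p : extends_to_bad p -> minimal_next p (next_min p).
Proof.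
case=> x bx px; apply: epsilon_spec; apply: ex_min_measure.
exists (x (size p)), x => // i; rewrite size_rcons ltnS nth_rcons leq_eqVlt.
by case/orP => [/eqP->|ltip]; rewrite ?ltnn ?eqxx // ltip px.
Qed.

Fixpoint mbs_prefix (n : nat) : seq (seq T) :=
  if n is n'.+1 then rcons (mbs_prefix n') (next_min (mbs_prefix n')) else [::].

Definition mbs (n : nat) : seq T := next_min (mbs_prefix n).

Lemma size_mbs_prefix n : size (mbs_prefix n) = n.
Proof. by elim: n => //= n IH; rewrite size_rcons IH. Qed.

Lemma nth_mbs_prefix n i : (i < n)%N -> nth [::] (mbs_prefix n) i = mbs i.
Proof.
elim: n => // n IH; rewrite ltnS /= nth_rcons size_mbs_prefix leq_eqVlt.
by case/orP => [/eqP->|ltin]; rewrite ?ltnn ?eqxx // ltin IH.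
Qed.

Hypothesis bad_exists : extends_to_bad [::].

Lemma extends_to_bad_mbs_prefix n : extends_to_bad (mbs_prefix n).
Proof. by elim: n => //= n IH; case: (next_minP IH). Qed.

Lemma mbs_bad : bad mbs.
Proof.
move=> i j lij; have [x bx px] := extends_to_bad_mbs_prefix j.+1.
rewrite -(nth_mbs_prefix (ltn_trans lij (ltnSn j))) -(nth_mbs_prefix (ltnSn j)).
by rewrite -!px ?size_mbs_prefix //; [apply: bx | apply: ltn_trans lij _].
Qed.

Lemma mbs_neq_nil i : mbs i <> [::].
Proof. by move=> mi; apply: (mbs_bad (ltnSn i)); rewrite mi; apply: subword_nil. Qed.

(* Splicing the tails along an ascending subsequence of the heads gives a bad
   sequence agreeing with [mbs] before [f 0] whose entry at [f 0] is shorter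
   than [mbs (f 0)]. *)
Lemma mbs_heads_not_ascending (a : T) (f : nat -> nat) :
  {homo f : i j / (i < j)%N} ->
  ~ (forall i j, (i < j)%N -> R (head a (mbs (f i))) (head a (mbs (f j)))).
Proof.
move=> f_incr Rf.
have mbsE i : mbs i = head a (mbs i) :: behead (mbs i).
  by case: (mbs i) (@mbs_neq_nil i).
have f0_le n : (f 0 <= f n)%N by case: n => // n; apply/ltnW/f_incr.
pose y n := if (n < f 0)%N then mbs n else behead (mbs (f (n - f 0))).
have y_bad : bad y.
  move=> i j lij; rewrite /y; case: ifP => ltif; case: ifP => ltjf.
  - exact: mbs_bad.
  - move=> yij; apply: (mbs_bad (leq_trans ltif (f0_le (j - f 0)))).
    by rewrite (mbsE (f _)); apply: subword_cons_r.
  - by move: (ltn_trans lij ltjf); rewrite ltif.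
  - have lt_shift : (i - f 0 < j - f 0)%N by rewrite ltn_sub2rE // leqNgt ltif.
    move=> yij; apply: (mbs_bad (f_incr _ _ lt_shift)).
    rewrite (mbsE (f (i - f 0))) (mbsE (f (j - f 0))).
    exact: subword_cons (Rf _ _ lt_shift) yij.
have : extends_to_bad (rcons (mbs_prefix (f 0)) (behead (mbs (f 0)))).
  exists y => // i; rewrite size_rcons size_mbs_prefix ltnS nth_rcons size_mbs_prefix.
  rewrite /y leq_eqVlt => /orP[/eqP->|ltif]; first by rewrite ltnn eqxx subnn.
  by rewrite ltif nth_mbs_prefix.
move=> /((next_minP (extends_to_bad_mbs_prefix (f 0))).2).
by rewrite -/(mbs (f 0)) {1}mbsE /= ltnn.
Qed.

End MinimalBadSequence.

Lemma higman (T : eqType) (R : rel T) :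
  has_ascending_subseqs R ->
  forall x : nat -> seq T, exists i j, (i < j)%N /\ subword R (x i) (x j).
Proof.
move=> ascR x; apply: NNPP => no_good.
have bad_exists : extends_to_bad R [::].
  by exists x => // i j lij xij; apply: no_good; exists i, j.
have [a _] : exists a : T, True by case: (mbs R 0) (@mbs_neq_nil T R bad_exists 0) => // a.
have [f [f_incr Rf]] := ascR (fun i => head a (mbs R i)).
exact: (mbs_heads_not_ascending bad_exists f_incr Rf).
Qed.

Theorem proposition2p4 (k : comNzRingType) (r : nat) :
  noetherian_ring k -> (0 < r)%N ->
  (forall (d d' : nat) (w w' : seq (r.-tuple nat)),
      (0 < size w)%N ->
      all (fun x : r.-tuple nat => sumn x == d) w ->
      all (fun x : r.-tuple nat => sumn x == d') w' ->
      (mon_le (monoA k d w) (monoA k d' w') <-> word_le w w'))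
  /\
  (forall x : nat -> seq (r.-tuple nat),
      exists i j, (i < j)%N /\ word_le (x i) (x j)).
Proof.
move=> _ _; split.
  move=> d d' w w' w_gt0 dw dw'; split; first exact: mon_le_word_le dw.
  exact: word_le_mon_le.
exact: higman (@dickson r).
Qed.
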